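(* Consider the caching network and the cache-eavesdropper scenario $S_2$ described in the context, with a placement $\mathbf{m}=(m_1,\dots,m_N)$ of nonnegative integers filling the caches, i.e., $\sum_{j=1}^N m_j = nM$. If the network is secure in scenario $S_2$, then $M < N/S$.
   Context: A macro base station has access to a library of $N$ files $F_1,\dots,F_N$. There are $N_{\text{SBS}}$ small-cell base stations (SBSs), each with a cache of size $M$ files. Each file is split into $n$ fragments and encoded with a code such that any $n$ distinct encoded packets of a file suffice to recover it, while fewer than $n$ distinct packets do not allow recovery. A placement $\mathbf{m}$ means each SBS stores $m_j$ encoded packets of $F_j$, with packets stored at different SBSs all distinct. Each location is served by some number $d\in\{1,\dots,S\}$ of SBSs, where $S$ is the maximum number of SBSs serving a user and is attained at some location. Scenario $S_2$: an eavesdropper at a location served by $d$ SBSs has access to the cache contents of those $d$ SBSs, hence to $d m_j$ distinct packets of each file $F_j$. The network is secure in scenario $S_2$ if for every location of the eavesdropper it cannot recover any file. *)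

From mathcomp Require Import all_boot all_order all_algebra.
Set Implicit Arguments. Unset Strict Implicit. Unset Printing Implicit Defensive.

(* A file encoded into n fragments (MDS-type code) can be recovered from
   k distinct encoded packets iff n <= k. *)
Definition recoverable (n k : nat) : bool := n <= k.

(* Scenario S_2: an eavesdropper at location l, served by nserv l SBSs,
   obtains nserv l * m j distinct packets of file j. *)
Definition secure_S2 (L : Type) (nserv : L -> nat) (n N : nat)
  (m : 'I_N -> nat) : Prop :=
  forall (l : L) (j : 'I_N), ~~ recoverable n (nserv l * m j).

From mathcomp Require Import all_boot all_order all_algebra.
Import Order.TTheory GRing.Theory Num.Theory.

Set Implicit Arguments.
Unset Strict Implicit.

(* At the location served by S caches the eavesdropper holds S m_j < n packets
   of every file, so S m_j <= n - 1.  Summing over the N files gives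
   S n M = S (m_1 + ... + m_N) <= N (n - 1) < N n, i.e. S M < N. *)

Lemma secure_S2_packets_lt (L : Type) (nserv : L -> nat) (n N : nat)
    (m : 'I_N -> nat) (l : L) (j : 'I_N) :
  secure_S2 nserv n m -> nserv l * m j < n.
Proof. by move/(_ l j); rewrite /recoverable -ltnNge. Qed.

Lemma sum_scaled_lt (N d n : nat) (m : 'I_N -> nat) :
  0 < N -> (forall j, d * m j < n) -> d * \sum_(j < N) m j < N * n.
Proof.
move=> N_gt0 lt_dm; have n_gt0 : 0 < n by apply: leq_ltn_trans (lt_dm (Ordinal N_gt0)).
have le_sum : d * \sum_(j < N) m j <= N * n.-1.
  rewrite big_distrr -[N in N * _]card_ord -sum_nat_const.
  by apply: leq_sum => j _; rewrite -ltnS prednK.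
by apply: leq_ltn_trans le_sum _; rewrite ltn_pmul2l // prednK.
Qed.

Lemma secure_S2_cache_size_lt (L : Type) (nserv : L -> nat) (n N M : nat)
    (m : 'I_N -> nat) (l : L) :
  0 < N -> 0 < n -> \sum_(j < N) m j = n * M -> secure_S2 nserv n m ->
  nserv l * M < N.
Proof.
move=> N_gt0 n_gt0 sum_m sec.
have := sum_scaled_lt N_gt0 (fun j => secure_S2_packets_lt l j sec).
by rewrite sum_m mulnCA [N * n]mulnC ltn_pmul2l.
Qed.

Theorem corollary3
  (N N_SBS M n S : nat) (L : Type) (nserv : L -> nat) (m : 'I_N -> nat) :
  (0 < N)%N -> (0 < n)%N -> (1 <= S)%N -> (S <= N_SBS)%N ->
  (forall l : L, (1 <= nserv l <= S)%N) ->
  (exists l : L, nserv l = S) ->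
  (\sum_(j < N) m j)%N = (n * M)%N ->
  secure_S2 nserv n m ->
  (M%:R < N%:R / S%:R :> rat)%R.
Proof.
move=> N_gt0 n_gt0 S_gt0 _ _ [l nserv_l] sum_m sec.
have := secure_S2_cache_size_lt l N_gt0 n_gt0 sum_m sec.
by rewrite nserv_l mulnC => lt_MS; rewrite ltr_pdivlMr ?ltr0n // -natrM ltr_nat.
Qed.
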